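(* Let $\Omega$ be a verification operator for $|\Psi\rangle$ with spectral gap $\nu(\Omega)$, and let $\sigma_1,\dots,\sigma_N$ be density operators on $\mathcal H$. Let $\epsilon_j=1-\langle\Psi|\sigma_j|\Psi\rangle$ and $\bar\epsilon=\frac1N\sum_{j=1}^N\epsilon_j$. Then the probability that the independent states $\sigma_1,\dots,\sigma_N$ pass all $N$ tests satisfies $$\prod_{j=1}^N\mathrm{tr}(\Omega\sigma_j)\le[1-\nu(\Omega)\bar\epsilon]^N.$$
   Context: Let $\mathcal H$ be a finite-dimensional Hilbert space and $|\Psi\rangle\in\mathcal H$ a unit vector. A verification operator for $|\Psi\rangle$ is a Hermitian operator $\Omega$ on $\mathcal H$ with $0\le\Omega\le1$ and $\Omega|\Psi\rangle=|\Psi\rangle$, whose eigenvalue $1$ is nondegenerate; with $\beta(\Omega)$ its second largest eigenvalue, the spectral gap is $\nu(\Omega)=1-\beta(\Omega)$. *)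

(* finite-dimensional Hilbert space H = C^n with
   C = R[i], R : realType (so C is the field of complex numbers). *)
From mathcomp Require Import all_boot all_algebra.
From mathcomp Require Import reals.
From mathcomp.real_closed Require Export complex.
Set Implicit Arguments.
Unset Strict Implicit.
Unset Printing Implicit Defensive.
Import GRing.Theory Num.Theory.
Local Open Scope ring_scope.

Section QDefs.
Variable R : realType.
Local Notation C := R[i].

Definition adjmx m n (A : 'M[C]_(m, n)) : 'M[C]_(n, m) :=
  (map_mx (fun x : C => x^*) A)^T.

Definition inner n (u v : 'cV[C]_n) : C := (adjmx u *m v) 0 0.

Definition unit_vector n (Psi : 'cV[C]_n) : Prop := inner Psi Psi = 1.

Definition hermitian n (A : 'M[C]_n) : Prop := adjmx A = A.

Definition psd n (A : 'M[C]_n) : Prop :=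
  hermitian A /\ forall v : 'cV[C]_n, 0 <= inner v (A *m v).

Definition loewner_le n (A B : 'M[C]_n) : Prop := psd (B - A).

Definition density n (sigma : 'M[C]_n) : Prop := psd sigma /\ \tr sigma = 1.

Definition is_eigenvalue n (A : 'M[C]_n) (a : C) : Prop :=
  exists v : 'cV[C]_n, v != 0 /\ A *m v = a *: v.

(* Verification operator for |Psi>: Hermitian, 0 <= Omega <= 1,
   Omega |Psi> = |Psi>, and eigenvalue 1 nondegenerate (its eigenspace is
   the line spanned by |Psi>). *)
Definition verification_operator n (Omega : 'M[C]_n) (Psi : 'cV[C]_n) : Prop :=
  [/\ hermitian Omega, psd Omega, loewner_le Omega 1%:M,
      Omega *m Psi = Psi &
      forall v : 'cV[C]_n, Omega *m v = v -> exists c : C, v = c *: Psi].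

(* Since 0 <= Omega <= 1 and the eigenvalue 1 (the largest one) is
   nondegenerate, the second largest eigenvalue counted with multiplicity is
   the largest eigenvalue different from 1. *)
Definition second_largest_eigenvalue n (Omega : 'M[C]_n) (beta : C) : Prop :=
  [/\ is_eigenvalue Omega beta, beta != 1 &
      forall a : C, is_eigenvalue Omega a -> a != 1 -> a <= beta].

Definition spectral_gap (beta : C) : C := 1 - beta.

End QDefs.

From Pilot Require Import Defs.
From mathcomp Require Import all_boot all_algebra.
From mathcomp Require Import reals.
From mathcomp.real_closed Require Import complex.
From mathcomp Require Import order sesquilinear spectral ring.
Import Order.TTheory GRing.Theory Num.Theory Num.Def.
Set Implicit Arguments.
Unset Strict Implicit.
Local Open Scope ring_scope.
Local Open Scope sesquilinear_scope.

(* Diagonalise Omega in an orthonormal eigenbasis (u_k) with eigenvalues d_k,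
   so that tr(Omega sigma) = sum_k d_k <u_k|sigma|u_k>.  An eigenvector with
   d_k = 1 is a multiple of Psi, and every other eigenvalue is at most beta;
   hence d_k <u_k|sigma|u_k> <= beta <u_k|sigma|u_k>
   + (1 - beta) |<u_k|Psi>|^2 <Psi|sigma|Psi>.  Summing, with
   sum_k <u_k|sigma|u_k> = tr sigma = 1 and Parseval sum_k |<u_k|Psi>|^2 = 1,
   gives tr(Omega sigma_j) <= 1 - nu eps_j.  The AM-GM inequality then bounds
   the product of these N nonnegative factors by the N-th power of their mean,
   which is 1 - nu eps_bar. *)

Lemma prod_le_mean_expr (F : numFieldType) N (x : 'I_N -> F) :
  (forall j, 0 <= x j) -> \prod_j x j <= ((\sum_j x j) / N%:R) ^+ N.
Proof.
move=> x_ge0; have := (leif_AGM (A := predT) (fun j _ => x_ge0 j)).1.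
by rewrite cardT size_enum_ord.
Qed.

Section Inner.
Variable R : realType.
Local Notation C := R[i].

Lemma adjmxE m n (A : 'M[C]_(m, n)) : adjmx A = A ^t conjC.
Proof. by rewrite /adjmx map_trmx. Qed.

Lemma adjmxK m n (A : 'M[C]_(m, n)) : adjmx (adjmx A) = A.
Proof. by apply/matrixP=> i j; rewrite !mxE conjCK. Qed.

Lemma adjmxM m n p (A : 'M[C]_(m, n)) (B : 'M[C]_(n, p)) :
  adjmx (A *m B) = adjmx B *m adjmx A.
Proof. by rewrite /adjmx map_mxM trmx_mul. Qed.

Lemma innerE n (u v : 'cV[C]_n) : inner u v = \sum_i (u i 0)^* * v i 0.
Proof. by rewrite /inner mxE; apply: eq_bigr => i _; rewrite !mxE. Qed.

Lemma innerZl n (u v : 'cV[C]_n) c : inner (c *: u) v = c^* * inner u v.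
Proof.
by rewrite !innerE mulr_sumr; apply: eq_bigr => i _; rewrite mxE rmorphM mulrA.
Qed.

Lemma innerZr n (u v : 'cV[C]_n) c : inner u (c *: v) = c * inner u v.
Proof. by rewrite /inner -scalemxAr mxE. Qed.

Lemma inner_eq1_neq0 n (v : 'cV[C]_n) : inner v v = 1 -> v != 0.
Proof.
apply: contra_eq_neq => ->; rewrite /inner /adjmx map_mx0 trmx0 mul0mx mxE.
by rewrite eq_sym oner_neq0.
Qed.

Lemma inner_gt0 n (v : 'cV[C]_n) : v != 0 -> 0 < inner v v.
Proof.
move=> v_neq0; have term_ge0 i (_ : true) : 0 <= (v i 0)^* * v i 0.
  by rewrite mulrC mul_conjC_ge0.
rewrite lt_def innerE sumr_ge0 // andbT; apply: contra v_neq0 => /eqP.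
move=> /psumr_eq0P v0; apply/eqP/matrixP => i j; rewrite ord1 mxE.
by apply/eqP; rewrite -mul_conjC_eq0 mulrC v0.
Qed.

Lemma inner_colE n m (Q : 'M[C]_(n, m)) k (v : 'cV[C]_n) :
  inner (col k Q) v = (adjmx Q *m v) k 0.
Proof. by rewrite innerE mxE; apply: eq_bigr => i _; rewrite !mxE. Qed.

Lemma mulmx_colE m n p (A : 'M[C]_(m, n)) (B : 'M[C]_(n, p)) k i :
  (A *m col k B) i 0 = (A *m B) i k.
Proof. by rewrite !mxE; apply: eq_bigr => l _; rewrite !mxE. Qed.

End Inner.

Section Spectral.
Variables (R : realType) (n : nat).
Local Notation C := R[i].
Implicit Types (A B Q : 'M[C]_n) (v : 'cV[C]_n).

Lemma hermitian_eigenbasis A : Defs.hermitian A ->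
  exists Q, exists d : 'rV[C]_n,
    [/\ adjmx Q *m Q = 1%:M, Q *m adjmx Q = 1%:M & A *m Q = Q *m diag_mx d].
Proof.
move=> hA; have /orthomx_spectralP A_eq : A \is normalmx.
  by apply/normalmxP; rewrite -adjmxE hA.
set P := spectralmx A in A_eq; have P_unit : P \in unitmx.
  exact/unitarymx_unit/spectral_unitarymx.
have P_inv : invmx P = adjmx P.
  by rewrite adjmxE invmx_unitary ?spectral_unitarymx.
exists (adjmx P), (spectral_diag A); rewrite adjmxK -P_inv.
split; [exact: mulmxV | exact: mulVmx |].
by rewrite {1}A_eq -!mulmxA mulmxV ?mulmx1.
Qed.

Lemma eigen_col A Q (d : 'rV[C]_n) k :
  A *m Q = Q *m diag_mx d -> A *m col k Q = d 0 k *: col k Q.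
Proof.
move=> /matrixP AQ; apply/matrixP => i j; rewrite ord1 mulmx_colE AQ.
by rewrite mul_mx_diag !mxE mulrC.
Qed.

Lemma inner_col_orthonormal Q k l : adjmx Q *m Q = 1%:M ->
  inner (col k Q) (col l Q) = (k == l)%:R.
Proof. by move=> QQ; rewrite inner_colE mulmx_colE QQ mxE. Qed.

Lemma mxtrace_orthonormal_basis Q B : Q *m adjmx Q = 1%:M ->
  \tr B = \sum_k inner (col k Q) (B *m col k Q).
Proof.
move=> QQ; rewrite -[in LHS](mulmx1 B) -QQ mulmxA mxtrace_mulC mulmxA.
by apply: eq_bigr => k _; rewrite inner_colE mulmxA mulmx_colE.
Qed.

Lemma parseval_orthonormal_basis Q v : Q *m adjmx Q = 1%:M ->
  \sum_k `|inner (col k Q) v| ^+ 2 = inner v v.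
Proof.
move=> QQ; transitivity (inner (adjmx Q *m v) (adjmx Q *m v)).
  by rewrite innerE; apply: eq_bigr => k _; rewrite inner_colE normCK mulrC.
by rewrite /inner adjmxM adjmxK mulmxA -(mulmxA _ Q) QQ mulmx1.
Qed.

Lemma psd_eigenvalue_ge0 A a v : psd A -> v != 0 -> A *m v = a *: v -> 0 <= a.
Proof.
move=> [_ A_ge0] /inner_gt0 v_gt0 Av.
by have := A_ge0 v; rewrite Av innerZr pmulr_lge0.
Qed.

End Spectral.

Section Verification.
Variables (R : realType) (n : nat).
Local Notation C := R[i].
Variables (Psi : 'cV[C]_n) (Omega : 'M[C]_n) (beta : C).
Hypotheses (Psi_unit : unit_vector Psi)
  (Omega_ver : verification_operator Omega Psi)
  (beta_second : second_largest_eigenvalue Omega beta).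

Lemma second_largest_eigenvalue_le1 : beta <= 1.
Proof.
have [_ _ Omega_le1 _ _] := Omega_ver.
have [[v [v_neq0 Ov]] _ _] := beta_second.
rewrite -subr_ge0; apply: psd_eigenvalue_ge0 Omega_le1 v_neq0 _.
by rewrite mulmxBl mul1mx Ov scalerBl scale1r.
Qed.

Lemma verification_eigen_term sigma (u : 'cV[C]_n) d :
  psd sigma -> inner u u = 1 -> Omega *m u = d *: u ->
  d * inner u (sigma *m u) <=
    beta * inner u (sigma *m u)
    + (1 - beta) * (`|inner u Psi| ^+ 2 * inner Psi (sigma *m Psi)).
Proof.
move=> [_ sigma_ge0] u_unit Ou; have [_ _ _ _ fix_Psi] := Omega_ver.
have [_ _ beta_max] := beta_second.
have [d1 | d_neq1] := eqVneq d 1.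
  have [c ->] : exists c, u = c *: Psi by apply: fix_Psi; rewrite Ou d1 scale1r.
  rewrite -scalemxAr !innerZl !innerZr Psi_unit normCK !mulr1 conjCK d1.
  by rewrite le_eqVlt; apply/orP; left; apply/eqP; ring.
have d_le : d <= beta.
  by apply: beta_max d_neq1; exists u; split; first exact: inner_eq1_neq0.
apply: le_trans (ler_wpM2r (sigma_ge0 u) d_le) _; rewrite lerDl mulr_ge0 //.
  by rewrite subr_ge0 second_largest_eigenvalue_le1.
by rewrite mulr_ge0 ?exprn_ge0.
Qed.

Lemma mxtrace_verification_bounds sigma : density sigma ->
  0 <= \tr (Omega *m sigma) <=
    1 - spectral_gap beta * (1 - inner Psi (sigma *m Psi)).
Proof.
move=> [sigma_psd sigma_tr]; have [Omega_herm Omega_psd _ _ _] := Omega_ver.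
have [Q [d [QQ QQ' OQ]]] := hermitian_eigenbasis Omega_herm.
pose u k := col k Q.
have u_unit k : inner (u k) (u k) = 1 by rewrite inner_col_orthonormal ?eqxx.
have Ou k : Omega *m u k = d 0 k *: u k := eigen_col k OQ.
have tr_eigen :
    \tr (Omega *m sigma) = \sum_k d 0 k * inner (u k) (sigma *m u k).
  rewrite mxtrace_mulC (mxtrace_orthonormal_basis _ QQ'); apply: eq_bigr => k _.
  by rewrite -mulmxA Ou -scalemxAr innerZr.
apply/andP; split.
  rewrite tr_eigen sumr_ge0 // => k _; rewrite mulr_ge0 ?(sigma_psd.2 (u k)) //.
  exact: psd_eigenvalue_ge0 Omega_psd (inner_eq1_neq0 (u_unit k)) (Ou k).
rewrite tr_eigen; apply: le_trans (ler_sum _ (fun k _ =>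
  verification_eigen_term sigma_psd (u_unit k) (Ou k))) _.
rewrite big_split /= -!mulr_sumr -mulr_suml (parseval_orthonormal_basis _ QQ').
rewrite -(mxtrace_orthonormal_basis _ QQ') sigma_tr Psi_unit /spectral_gap.
by rewrite le_eqVlt; apply/orP; left; apply/eqP; ring.
Qed.

End Verification.

Theorem proposition1 (R : realType) (n N : nat)
    (Psi : 'cV[R[i]]_n) (Omega : 'M[R[i]]_n) (beta : R[i])
    (sigma : 'I_N -> 'M[R[i]]_n) :
  unit_vector Psi ->
  verification_operator Omega Psi ->
  second_largest_eigenvalue Omega beta ->
  (forall j, density (sigma j)) ->
  let eps := fun j : 'I_N => 1 - inner Psi (sigma j *m Psi) in
  let eps_bar := (\sum_(j < N) eps j) / N%:R in
  \prod_(j < N) \tr (Omega *m sigma j)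
    <= (1 - spectral_gap beta * eps_bar) ^+ N.
Proof.
move=> Psi_unit Omega_ver beta_second sigma_density; cbv zeta.
have [N0 | N_gt0] := posnP N; first by subst N; rewrite big_ord0 expr0.
pose x j : R[i] := 1 - spectral_gap beta * (1 - inner Psi (sigma j *m Psi)).
have tr_bounds j : 0 <= \tr (Omega *m sigma j) <= x j.
  by have := mxtrace_verification_bounds Psi_unit Omega_ver beta_second
    (sigma_density j).
have x_ge0 j : 0 <= x j.
  by have /andP[tr_ge0 tr_le] := tr_bounds j; exact: le_trans tr_le.
have mean_x : (\sum_j x j) / N%:R =
    1 - spectral_gap beta * ((\sum_j (1 - inner Psi (sigma j *m Psi))) / N%:R).
  rewrite big_split /= sumr_const card_ord sumrN -mulr_sumr.
  by field; rewrite pnatr_eq0 -lt0n.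
rewrite -mean_x; apply: le_trans _ (prod_le_mean_expr x_ge0).
exact: ler_prod (fun j _ => tr_bounds j).
Qed.
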